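(* For any positive integers $g$ and $k$, \[\sum_{S\in\mathcal{C}(k,g)}e_2(S)\le 2F_{g+k},\] where $F_n$ is the $n$-th Fibonacci number ($F_1=F_2=1$, $F_{n+2}=F_{n+1}+F_n$).
   Context: A numerical semigroup $S$ is a submonoid of $\mathbb{N}_0$ with finite complement; its genus is the size of the complement, $m(S)$ its smallest nonzero element, $F(S)$ the largest element of the complement, and $e(S)$ the size of the minimal generating set $(S\setminus\{0\})\setminus((S\setminus\{0\})+(S\setminus\{0\}))$. Define $e_1(S)=\#([m(S),2m(S)-1]\cap S)$ and $e_2(S)=e(S)-e_1(S)$. $\mathcal{C}(k,g)$ is the set of numerical semigroups $S$ of genus $g$ with $2m(S)<F(S)<3m(S)$ and $F(S)=2m(S)+k$. *)

From mathcomp Require Import all_boot.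
From mathcomp Require Import finmap.
Set Implicit Arguments. Unset Strict Implicit. Unset Printing Implicit Defensive.


(* A numerical semigroup S is represented by its (finite) set of gaps
   G = N \ S.  S is a submonoid of N_0 with finite complement iff
   0 \notin G and N \ G is closed under addition. *)
Definition inS (G : {fset nat}) (n : nat) : bool := n \notin G.

Definition is_numsg (G : {fset nat}) : Prop :=
  inS G 0 /\ forall a b, inS G a -> inS G b -> inS G (a + b).

Definition genus (G : {fset nat}) : nat := (#|` G|)%fset.

Definition frob (G : {fset nat}) : nat := \max_(x <- G) x.

(* multiplicity m(S): smallest nonzero element of S; it lies in [1, F+1]
   since F+1 \in S. *)
Definition mult (G : {fset nat}) : nat :=
  head 0 [seq n <- iota 1 (frob G).+1 | inS G n].

Definition min_gen (G : {fset nat}) (s : nat) : bool :=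
  [&& 0 < s, inS G s &
      ~~ [exists a : 'I_s, (0 < (a : nat)) && inS G a && inS G (s - a)]].

(* e(S): every minimal generator s satisfies s <= F(S) + m(S)
   (if s > F + m then s = m + (s - m) with s - m > F nonzero in S),
   so counting in [0, F + m] counts all of them. *)
Definition embdim (G : {fset nat}) : nat :=
  count (min_gen G) (iota 0 (frob G + mult G).+1).

Definition e1 (G : {fset nat}) : nat :=
  count (inS G) (iota (mult G) (mult G)).

Definition e2 (G : {fset nat}) : nat := embdim G - e1 G.

Definition inC (k g : nat) (G : {fset nat}) : Prop :=
  [/\ is_numsg G, genus G = g,
      2 * mult G < frob G < 3 * mult G & frob G = 2 * mult G + k].

Fixpoint fib (n : nat) : nat :=
  match n with
  | 0 => 0
  | 1 => 1
  | (p.+1 as q).+1 => fib q + fib p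
  end.

(* Let S be in C(k,g), with multiplicity m and Frobenius number F = 2m + k.
   Record which of m+1, ..., F are gaps as a boolean word u of length m + k.
   Giving a gap weight 2 and a non-gap weight 1, u has weight g + k + 1, and
   it ends with a gap.  A minimal generator s counted by e2 lies in
   (2m, F + m]; with d = s - 2m, the element m + d = s - m is a gap, and for
   0 < i < d the elements m + i and s - (m + i) are never both in S, since
   otherwise s would decompose.  So the first d - 1 letters of u are covered
   by their own reverse and the d-th letter is a gap.  Such a marked word is
   determined by a flag together with a word of weight g + k - 1 (the
   covered prefix folded in two and interleaved, the mark turned into a
   separator, the final gap dropped), and there are F_{g+k} words of that
   weight, being the tilings of a strip of length g + k - 1 by squares and
   dominoes. *)

From mathcomp Require Import all_boot.
From mathcomp Require Import finmap.
From mathcomp Require Import zify.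
Set Implicit Arguments. Unset Strict Implicit. Unset Printing Implicit Defensive.

(** * Words of given weight *)

Definition weight (s : seq bool) : nat := size s + count id s.

Lemma weight_cat s t : weight (s ++ t) = weight s + weight t.
Proof. by rewrite /weight size_cat count_cat addnACA. Qed.

Lemma weight_rev s : weight (rev s) = weight s.
Proof. by rewrite /weight size_rev count_rev. Qed.

Lemma weight_cons b s : weight (b :: s) = b.+1 + weight s.
Proof. by rewrite /weight /=; case: b; lia. Qed.

Lemma weight_nseq_true n : weight (nseq n true) = n.*2.
Proof. by rewrite /weight size_nseq count_nseq mul1n addnn. Qed.

Fixpoint words_of_weight (n : nat) : seq (seq bool) :=
  match n with
  | 0 => [:: [::]]
  | 1 => [:: [:: false]]
  | (p.+1 as q).+1 =>
      map (cons false) (words_of_weight q) ++ map (cons true) (words_of_weight p)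
  end.

Lemma size_words_of_weight n : size (words_of_weight n) = fib n.+1.
Proof.
suff: size (words_of_weight n) = fib n.+1 /\
      size (words_of_weight n.+1) = fib n.+2 by case.
elim: n => [|n [IHn IHn1]] //=.
by rewrite size_cat !size_map IHn IHn1.
Qed.

Lemma mem_words_of_weight s : s \in words_of_weight (weight s).
Proof.
elim: s => [|[] s IHs] //; rewrite weight_cons /=.
  by rewrite mem_cat map_f ?orbT.
case: (weight s) IHs => [|n] IHs /=; last by rewrite mem_cat map_f.
by move: IHs; rewrite mem_seq1 => /eqP ->.
Qed.

(** * Coding marked words *)

Fixpoint interleave (x y : seq bool) : seq bool :=
  match x, y with
  | a :: x', b :: y' => [:: a, b & interleave x' y']
  | _, _ => [::]
  end.

Fixpoint uninterleave (t : seq bool) : seq bool * seq bool :=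
  if t is a :: b :: t' then
    let: (x, y) := uninterleave t' in (a :: x, b :: y)
  else ([::], [::]).

Fixpoint split_interleaved (t : seq bool) : option (seq bool * seq bool * seq bool) :=
  if t is a :: b :: t' then
    if a || b then
      if split_interleaved t' is Some (x, y, r) then Some (a :: x, b :: y, r)
      else None
    else Some ([::], [::], t')
  else None.

Definition covering (x y : seq bool) : bool := all2 orb x y.

Lemma covering_size x y : covering x y -> size x = size y.
Proof. by rewrite /covering all2E => /andP[/eqP]. Qed.

Lemma coveringP x y : size x = size y ->
  reflect (forall i, i < size x -> nth false x i || nth false y i) (covering x y).
Proof.
move=> sxy; rewrite /covering all2E sxy eqxx /=.
apply: (iffP (all_nthP (false, false))); rewrite size_zip sxy minnn;
by move=> cov i /cov; rewrite nth_zip.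
Qed.

Lemma covering_take n x y : covering x y -> covering (take n x) (take n y).
Proof.
elim: x y n => [|a x IHx] [|b y] [|n] //= /andP[ab cov].
by rewrite ab; exact: IHx.
Qed.

Lemma covering_rev_halves v : covering v (rev v) ->
  let h := (size v)./2 in
  v = take h v ++ nseq (odd (size v)) true ++ rev (take h (rev v)).
Proof.
move=> /(coveringP (esym (size_rev v))) cov h.
rewrite take_rev revK; case odd_v: (odd (size v)) => /=.
  have -> : size v - h = h.+1 by rewrite /h; lia.
  have lt_h : h < size v by rewrite /h; lia.
  have mid : nth false v h.
    have := cov h lt_h; rewrite nth_rev //.
    have -> : size v - h.+1 = h by rewrite /h; lia.
    by rewrite orbb.
  by rewrite -{1}(cat_take_drop h v) (drop_nth false) ?mid.
have -> : size v - h = h by rewrite /h; lia.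
by rewrite cat_take_drop.
Qed.

Lemma split_interleaved_ff x y t : covering x y ->
  split_interleaved (interleave x y ++ [:: false, false & t]) = Some (x, y, t).
Proof.
by elim: x y => [|a x IHx] [|b y] //= /andP[ab /IHx ->]; rewrite ab.
Qed.

Lemma split_interleaved_none x y : covering x y ->
  split_interleaved (interleave x y) = None.
Proof.
by elim: x y => [|a x IHx] [|b y] //= /andP[ab /IHx ->]; rewrite ab.
Qed.

Lemma interleaveK x y : size x = size y -> uninterleave (interleave x y) = (x, y).
Proof. by elim: x y => [|a x IHx] [|b y] //= [] /IHx ->. Qed.

Lemma weight_interleave x y : size x = size y ->
  weight (interleave x y) = weight x + weight y.
Proof.
elim: x y => [|a x IHx] [|b y] //= [] /IHx w_xy.
by rewrite !weight_cons w_xy; lia.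
Qed.

(* When [covering x y], no pair of [interleave x y] reads [false, false], so
   [split_interleaved] finds the separator again.  Compared with
   [assemble x y b ro], the separator replaces the mark and the final [true]
   is dropped: this is the loss of weight 2 in [weight_encode]. *)
Definition encode (x y : seq bool) (b : bool) (ro : option (seq bool)) :
    bool * seq bool :=
  (b, interleave x y ++ if ro is Some r then [:: false, false & nseq b true ++ r]
                        else if b then [:: false; false] else [::]).

Definition decode (bt : bool * seq bool) :
    seq bool * seq bool * bool * option (seq bool) :=
  let: (b, t) := bt in
  if split_interleaved t is Some (x, y, t') then
    (x, y, b, if b then (if t' is _ :: r then Some r else None) else Some t')
  else let: (x, y) := uninterleave t in (x, y, b, None).

Lemma encodeK x y b ro : covering x y -> decode (encode x y b ro) = (x, y, b, ro).
Proof.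
move=> cov; have sxy := covering_size cov; rewrite /decode /encode.
case: ro b => [r|] [];
  by rewrite ?cats0 ?split_interleaved_ff ?split_interleaved_none ?interleaveK.
Qed.

Definition assemble (x y : seq bool) (b : bool) (ro : option (seq bool)) :
    seq bool :=
  x ++ nseq b true ++ rev y ++ true :: (if ro is Some r then rcons r true else [::]).

Lemma weight_encode x y b ro : size x = size y ->
  weight (encode x y b ro).2 + 2 = weight (assemble x y b ro).
Proof.
move=> sxy; rewrite /assemble !weight_cat weight_interleave // weight_nseq_true.
rewrite weight_rev weight_cons.
have weight_nil : weight [::] = 0 by [].
case: ro b => [r|] []; rewrite /= ?weight_cat ?weight_cons ?weight_nseq_true
  -?cats1 ?weight_cat ?weight_cons ?weight_nil; lia.
Qed.

Definition marked (u : seq bool) (d : nat) : bool :=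
  [&& 0 < d <= size u, nth false u d.-1, last false u
    & covering (take d.-1 u) (rev (take d.-1 u))].

Definition split_marked (u : seq bool) (d : nat) :=
  let v := take d.-1 u in
  let h := (size v)./2 in
  (take h v, take h (rev v), odd (size v),
   if drop d u is a :: w then Some (belast a w) else None).

Lemma split_markedP u d : marked u d ->
  let: (x, y, b, ro) := split_marked u d in
  [/\ covering x y, u = assemble x y b ro & d = (size x + b + size y).+1].
Proof.
case/and4P=> /andP[d_gt0 d_le] u_d last_u cov; rewrite /split_marked.
set v := take d.-1 u in cov *.
have size_v : size v = d.-1 by rewrite size_takel //; lia.
have halves_v := covering_rev_halves cov.
have size_x : size (take (size v)./2 v) = (size v)./2 by rewrite size_takel //; lia.
have size_y : size (take (size v)./2 (rev v)) = (size v)./2.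
  by rewrite size_takel // size_rev; lia.
split.
- exact: covering_take.
- rewrite /assemble (catA (nseq _ _)) catA -halves_v.
  rewrite -{1}(cat_take_drop d.-1 u) (drop_nth false); last by lia.
  rewrite u_d prednK //.
  congr (_ ++ _ :: _); case E: (drop d u) => [|a w] //.
  have last_w : last a w by move: last_u; rewrite -(cat_take_drop d u) E last_cat.
  by rewrite lastI last_w.
- rewrite size_x size_y; lia.
Qed.

Definition code (u : seq bool) (d : nat) : bool * seq bool :=
  let: (x, y, b, ro) := split_marked u d in encode x y b ro.

Lemma code_inj u d u' d' : marked u d -> marked u' d' ->
  code u d = code u' d' -> u = u' /\ d = d'.
Proof.
move=> /split_markedP + /split_markedP; rewrite /code.
case: split_marked => [[[x y] b] ro]; case: split_marked => [[[x' y'] b'] ro'].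
move=> [cov -> ->] [cov' -> ->] /(congr1 decode).
by rewrite !encodeK // => -[-> -> -> ->].
Qed.

Lemma weight_code u d : marked u d -> weight (code u d).2 + 2 = weight u.
Proof.
move=> /split_markedP; rewrite /code.
by case: split_marked => [[[x y] b] ro] [/covering_size sxy -> _]; exact: weight_encode.
Qed.

(** * Gap words of numerical semigroups *)

Lemma gap_le_frob G x : x \in G -> x <= frob G.
Proof. by move=> xG; rewrite /frob (leq_bigmax_seq x). Qed.

Lemma frob_gap G : 0 < frob G -> frob G \in G.
Proof.
rewrite /frob big_seq; elim/big_ind: _ => // x y IHx IHy.
by case: (leqP x y).
Qed.

Lemma head_filter_iota (P : pred nat) n l : has P (iota n l) ->
  let h := head 0 [seq j <- iota n l | P j] in
  [/\ P h, n <= h & forall j, n <= j < h -> ~~ P j].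
Proof.
elim: l n => [|l IHl] n //=; case: ifP => [Pn _ | nPn /IHl[Ph le_nh min_h]] /=.
  by split=> // j; lia.
split=> [//||j /andP[le_nj lt_jh]]; first lia.
case: (ltnP n j) => [lt_nj | le_jn]; first by apply: min_h; lia.
by rewrite (_ : j = n) ?nPn //; lia.
Qed.

Lemma mult_spec G :
  [/\ 0 < mult G, mult G \notin G & forall j, 0 < j < mult G -> j \in G].
Proof.
have S_frob1 : has (inS G) (iota 1 (frob G).+1).
  apply/hasP; exists (frob G).+1; first by rewrite mem_iota; lia.
  by apply/negP => /gap_le_frob; lia.
have [S_m m_gt0 min_m] := head_filter_iota S_frob1.
by split=> // j /min_m; rewrite negbK.
Qed.

Definition gap_word (G : {fset nat}) : seq bool :=
  [seq j \in G | j <- iota (mult G).+1 (frob G - mult G)].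

Lemma size_gap_word G : size (gap_word G) = frob G - mult G.
Proof. by rewrite size_map size_iota. Qed.

Lemma nth_gap_word G j : j < frob G - mult G ->
  nth false (gap_word G) j = (mult G + j.+1 \in G).
Proof.
move=> lt_j; rewrite (nth_map 0) ?size_iota // nth_iota //.
by rewrite addSn addnS.
Qed.

Lemma last_gap_word G : mult G < frob G -> last false (gap_word G).
Proof.
move=> lt_mF; rewrite -nth_last size_gap_word nth_gap_word; last by lia.
have -> : mult G + (frob G - mult G).-1.+1 = frob G by lia.
by apply: frob_gap; lia.
Qed.

Lemma mem_gaps G n : 0 \notin G -> (n \in G) =
  (0 < n < mult G) || (mult G < n <= frob G) && nth false (gap_word G) (n - (mult G).+1).
Proof.
move=> G0; have [m_gt0 m_notin lt_m_gap] := mult_spec G.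
case: (posnP n) => [-> | n_gt0]; first exact: negbTE.
case: (ltnP n (mult G)) => [lt_nm | le_mn]; first by rewrite lt_m_gap ?n_gt0.
have [-> | lt_mn] : n = mult G \/ mult G < n by lia.
  by rewrite ltnn andbF (negbTE m_notin).
rewrite lt_mn andbF /=; case: (leqP n (frob G)) => [le_nF | lt_Fn].
  rewrite nth_gap_word; last by lia.
  by have -> : mult G + (n - (mult G).+1).+1 = n by lia.
by apply/negP => /gap_le_frob; lia.
Qed.

Lemma genus_gap_word G : 0 \notin G -> mult G <= frob G ->
  genus G = (mult G).-1 + count id (gap_word G).
Proof.
move=> G0 le_mF; have [m_gt0 m_notin lt_m_gap] := mult_spec G.
have G_iota : perm_eq G [seq j <- iota 1 (frob G) | j \in G].
  apply: uniq_perm; [exact: fset_uniq | exact/filter_uniq/iota_uniq |] => j.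
  rewrite mem_filter mem_iota; apply/idP/andP => [jG | [_ //]]; split=> //.
  have := gap_le_frob jG; have : j != 0 by apply: contraNneq G0 => <-.
  lia.
rewrite /genus (perm_size G_iota) size_filter.
rewrite (_ : frob G = (mult G).-1 + (1 + (frob G - mult G))); last by lia.
rewrite !iotaD !count_cat /gap_word count_map /=.
have -> : 1 + (mult G).-1 = mult G by lia.
rewrite (negbTE m_notin) addn1.
rewrite (eq_in_count (a2 := predT)) ?count_predT ?size_iota //.
by move=> j; rewrite mem_iota => lt_jm; apply: lt_m_gap; lia.
Qed.

Lemma weight_gap_word k g G : inC k g G -> weight (gap_word G) = g + k + 1.
Proof.
case=> [[G0 _] genus_G _ frob_G]; have [m_gt0 _ _] := mult_spec G.
have le_mF : mult G <= frob G by lia.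
move: (genus_gap_word G0 le_mF) genus_G; rewrite /weight size_gap_word; lia.
Qed.

Lemma gap_word_inj k g G G' : inC k g G -> inC k g G' ->
  gap_word G = gap_word G' -> G = G'.
Proof.
case=> [[G0 _] _ _ frob_G] [[G0' _] _ _ frob_G'] eq_w.
have eq_m : mult G = mult G'.
  by move: (congr1 size eq_w); rewrite !size_gap_word; lia.
have eq_F : frob G = frob G' by rewrite frob_G frob_G' eq_m.
by apply/fsetP => n; rewrite (mem_gaps _ G0) (mem_gaps _ G0') eq_m eq_F eq_w.
Qed.

Definition large_gens (G : {fset nat}) : seq nat :=
  filter (min_gen G) (iota (2 * mult G) (frob G - mult G).+1).

(* No minimal generator lies in (0, m), and those in [m, 2m) are counted by e1. *)
Lemma e2_le_size_large_gens G : mult G <= frob G -> e2 G <= size (large_gens G).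
Proof.
move=> le_mF; have [m_gt0 _ lt_m_gap] := mult_spec G.
rewrite /e2 /embdim /e1 /large_gens size_filter.
rewrite (_ : (frob G + mult G).+1 = mult G + (mult G + (frob G - mult G).+1)); last by lia.
rewrite !iotaD !count_cat add0n addnn -mul2n.
have -> : count (min_gen G) (iota 0 (mult G)) = 0.
  apply/eqP; rewrite -leqn0 leqNgt -has_count; apply/hasPn => j.
  rewrite mem_iota /= => lt_jm.
  by rewrite /min_gen /inS; case: (posnP j) => //= j_gt0; rewrite lt_m_gap ?j_gt0.
have : count (min_gen G) (iota (mult G) (mult G)) <= count (inS G) (iota (mult G) (mult G)).
  by apply: sub_count => j /and3P[].
lia.
Qed.

Lemma gap_sub_min_gen G s a : min_gen G s -> 0 < a < s -> a \notin G -> s - a \in G.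
Proof.
case/and3P=> _ _ /existsPn no_split /andP[a_gt0 lt_as] aS.
by have := no_split (Ordinal lt_as); rewrite /= /inS a_gt0 aS negbK.
Qed.

Lemma marked_gap_word G s : mult G < frob G -> s \in large_gens G ->
  marked (gap_word G) (s - 2 * mult G).
Proof.
move=> lt_mF; have [m_gt0 m_notin _] := mult_spec G.
rewrite mem_filter mem_iota => /andP[gen_s /andP[le_2m_s lt_s]].
have sub_gap a : 0 < a < s -> a \notin G -> s - a \in G by exact: gap_sub_min_gen.
have s_m : s - mult G \in G by apply: sub_gap m_notin; lia.
have d_gt0 : 0 < s - 2 * mult G.
  rewrite lt0n; apply/eqP => d0; move: s_m.
  by rewrite (_ : s - mult G = mult G) ?(negbTE m_notin) //; lia.
have size_v : size (take (s - 2 * mult G).-1 (gap_word G)) = (s - 2 * mult G).-1.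
  by rewrite size_takel // size_gap_word; lia.
rewrite /marked d_gt0 size_gap_word last_gap_word //=.
apply/and3P; split; first by lia.
  rewrite nth_gap_word; last by lia.
  by rewrite (_ : mult G + (s - 2 * mult G).-1.+1 = s - mult G) //; lia.
apply/coveringP; first by rewrite size_rev.
move=> j; rewrite size_v => lt_j.
rewrite nth_rev size_v // !nth_take; [|lia|lia].
rewrite !nth_gap_word; [|lia|lia].
case: (boolP (mult G + j.+1 \in G)) => //= jS.
rewrite (_ : mult G + _ = s - (mult G + j.+1)); last by lia.
by apply: sub_gap jS; lia.
Qed.

Lemma inC_mult_lt_frob k g G : inC k g G -> mult G < frob G.
Proof. by case=> _ _ _ ->; have [m_gt0 _ _] := mult_spec G; lia. Qed.

Definition gen_code (G : {fset nat}) (s : nat) : bool * seq bool :=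
  code (gap_word G) (s - 2 * mult G).

Lemma gen_code_inj k g G G' s s' : inC k g G -> inC k g G' ->
  s \in large_gens G -> s' \in large_gens G' ->
  gen_code G s = gen_code G' s' -> G = G' /\ s = s'.
Proof.
move=> CG CG' sG sG'.
have marked_s := marked_gap_word (inC_mult_lt_frob CG) sG.
have marked_s' := marked_gap_word (inC_mult_lt_frob CG') sG'.
case/(code_inj marked_s marked_s') => /(gap_word_inj CG CG') eq_G; subst G'; split=> //.
by move: sG sG'; rewrite !mem_filter !mem_iota; lia.
Qed.

Lemma weight_gen_code k g G s : inC k g G -> s \in large_gens G ->
  weight (gen_code G s).2 = g + k - 1.
Proof.
move=> CG sG; have := weight_code (marked_gap_word (inC_mult_lt_frob CG) sG).
by rewrite /gen_code (weight_gap_word CG); lia.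
Qed.

Theorem lemma4p2 (g k : nat) (hg : 0 < g) (hk : 0 < k)
  (L : seq {fset nat}) (huniq : uniq L)
  (hL : forall G, G \in L -> inC k g G) :
  \sum_(G <- L) e2 G <= 2 * fib (g + k).
Proof.
pose P := [seq (G, s) | G <- L, s <- large_gens G].
have memP G s : (G, s) \in P -> G \in L /\ s \in large_gens G.
  by case/allpairsPdep => G' [s' [GL sG [-> ->]]].
have uniqP : uniq P.
  apply: allpairs_uniq_dep => // [G _ | [G s] [G' s'] _ _ [-> ->]] //.
  exact/filter_uniq/iota_uniq.
have sum_le : \sum_(G <- L) e2 G <= size P.
  rewrite size_allpairs_dep sumnE big_map big_seq_cond [X in _ <= X]big_seq_cond.
  apply: leq_sum => G /andP[GL _].
  exact/e2_le_size_large_gens/ltnW/(inC_mult_lt_frob (hL G GL)).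
pose codes := [seq (b, t) | b <- [:: true; false], t <- words_of_weight (g + k - 1)].
have size_codes : size codes = 2 * fib (g + k).
  by rewrite size_allpairs size_words_of_weight (_ : (g + k - 1).+1 = g + k) //; lia.
rewrite -size_codes (leq_trans sum_le) // -(size_map (fun p => gen_code p.1 p.2)).
apply: uniq_leq_size.
  rewrite map_inj_in_uniq // => -[G s] [G' s'] /memP[GL sG] /memP[GL' sG'].
  by case/(gen_code_inj (hL _ GL) (hL _ GL') sG sG') => -> ->.
move=> _ /mapP[[G s] /memP[GL sG] ->]; rewrite /codes.
have := weight_gen_code (hL _ GL) sG; case: (gen_code G s) => b t <-.
by apply: allpairs_f; [case: b | exact: mem_words_of_weight].
Qed.
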